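(* Let $\Sigma$ be a finite alphabet, let $\mathbf{w}$ be a right-infinite word over $\Sigma$, and let $L_{\mathbf w}$ be its Lie complexity function and $p_{\mathbf w}$ its factor complexity function. Then for each $n\ge 1$, $$L_{\mathbf w}(n)\le p_{\mathbf w}(n)-p_{\mathbf w}(n-1)+1.$$ In particular, if $\mathbf w$ has linear factor complexity, then $L_{\mathbf w}(n)$ is bounded above by a constant independent of $n$.
   Context: A factor of $\mathbf w$ is a finite block of contiguous symbols of $\mathbf w$ (the empty word included); $\mathrm{Fac}(\mathbf w)$ is the set of factors. The factor complexity $p_{\mathbf w}(n)$ is the number of distinct factors of $\mathbf w$ of length $n$ (so $p_{\mathbf w}(0)=1$). Two words are cyclically equivalent ($v\sim_C v'$) if each is a cyclic shift (conjugate) of the other; $[v]_C$ denotes the class of $v$. The Lie complexity is $L_{\mathbf w}(n)=\#\{[v]_C : |v|=n,\ [v]_C\subseteq \mathrm{Fac}(\mathbf w)\}$, i.e. the number of cyclic classes of length-$n$ words all of whose members are factors of $\mathbf w$. $\mathbf w$ has linear factor complexity if there are constants $A,B$ with $p_{\mathbf w}(n)\le An+B$ for all $n$. *)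

From mathcomp Require Import all_boot all_algebra.
From mathcomp Require Import boolp.
Set Implicit Arguments. Unset Strict Implicit. Unset Printing Implicit Defensive.

Definition infword (Sigma : finType) := nat -> Sigma.

Definition is_factor (Sigma : finType) (w : infword Sigma) (v : seq Sigma) : Prop :=
  exists i : nat, v = mkseq (fun k => w (i + k)) (size v).

Definition factors_n (Sigma : finType) (w : infword Sigma) (n : nat)
  : {set n.-tuple Sigma} :=
  [set t : n.-tuple Sigma | `[< is_factor w t >] ].

Definition factor_complexity (Sigma : finType) (w : infword Sigma) (n : nat) : nat :=
  #|factors_n w n|.

Definition cyc_class (Sigma : finType) (n : nat) (t : n.-tuple Sigma)
  : {set n.-tuple Sigma} :=
  [set u : n.-tuple Sigma | [exists k : 'I_n.+1, val u == rot k (val t)]].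

Definition lie_complexity (Sigma : finType) (w : infword Sigma) (n : nat) : nat :=
  #|[set cyc_class t | t in [set t : n.-tuple Sigma |
                                  cyc_class t \subset factors_n w n]]|.

Definition linear_factor_complexity (Sigma : finType) (w : infword Sigma) : Prop :=
  exists A B : nat, forall n : nat, factor_complexity w n <= A * n + B.

From mathcomp Require Import all_boot all_algebra.
Import GRing.Theory Num.Theory.
From mathcomp Require Import boolp zify.
Set Implicit Arguments. Unset Strict Implicit. Unset Printing Implicit Defensive.

(* Part 1: L(n) <= p(n) - p(n-1) + 1.  Call a factor u of length n
   introducing when the first occurrence of its suffix (u without its first
   letter) lies inside the first occurrence of u.  Every factor of length n-1
   except the prefix of w is the suffix of an introducing factor, so
   p(n-1) <= #introducing + 1; and every Lie class of length n contains a
   non-introducing factor (rotate the conjugate of earliest first occurrence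
   by one letter), so L(n) <= p(n) - #introducing.

   For a class of length n we
   compare w, read from the first occurrence of a representative t, with the
   periodic word t t t ...  Classes with a long least period contain many
   factors, so there are few of them; classes with no mismatch form a single
   class; the remaining ones are determined (weak Fine--Wilf property) by the
   right special window of length m just before the mismatch, and an
   averaging argument provides m in [(n-1)/2, n) with at most 2A + B right
   special factors. *)

Section PeriodicFunctions.
Variable A : Type.

Lemma periodic_congr (f : nat -> A) d x y : 0 < d ->
  (forall j, f (j + d) = f j) -> x = y %[mod d] -> f x = f y.
Proof.
move=> d0 fd exy.
have fmul c j : f (j + c * d) = f j.
  by elim: c => [|c IH]; rewrite ?addn0 // mulSn addnCA addnC fd.
by rewrite (divn_eq x d) (divn_eq y d) ![_ * d + _]addnC !fmul exy.
Qed.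

Lemma period_transfer (f g : nat -> A) d d' a a' m : 0 < d ->
  (forall j, f (j + d) = f j) -> (forall j, g (j + d') = g j) ->
  (forall i, i < m -> f (a + i) = g (a' + i)) -> d + d' <= m ->
  forall j, f (j + d') = f j.
Proof.
move=> d0 fd gd' fg dm j.
(* i < d is the position of the window congruent to j modulo d. *)
pose i := (j + a * d - a) %% d.
have id : i < d by exact: ltn_pmod.
have ai_j : a + i = j %[mod d].
  rewrite /i modnDmr (_ : a + _ = a * d + j) ?modnMDl //.
  by have := leq_pmulr a d0; rewrite mulnC; lia.
have ai_jd' : a + (i + d') = j + d' %[mod d] by rewrite addnA -modnDml ai_j modnDml.
rewrite -(periodic_congr d0 fd ai_jd') -(periodic_congr d0 fd ai_j).
by rewrite !fg ?addnA ?gd' //; lia.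
Qed.

End PeriodicFunctions.

Definition mkseq_tuple (T : Type) n (f : nat -> T) : n.-tuple T :=
  Tuple (introT eqP (size_mkseq f n)).

Lemma leq_card_imset_coarser (aT rT1 rT2 : finType) (f : aT -> rT1) (g : aT -> rT2)
    (A : {set aT}) :
  {in A &, forall x y, f x = f y -> g x = g y} -> #|g @: A| <= #|f @: A|.
Proof.
move=> f_g; have [->|[a aA]] := set_0Vmem A; first by rewrite !imset0 cards0.
pose lift y := if [pick x in A | f x == y] is Some x then g x else g a.
apply: leq_trans (leq_imset_card lift _); apply: subset_leq_card.
apply/subsetP => _ /imsetP[x xA ->]; apply/imsetP; exists (f x); first exact: imset_f.
rewrite /lift; case: pickP => [x' /andP[x'A /eqP fx'] | /(_ x)]; first exact: f_g.
by rewrite xA eqxx.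
Qed.

Lemma growth_sum (p r : nat -> nat) c h k : (forall m, p m + r m <= p m.+1) ->
  (forall j, j < k -> c <= r (h + j)) -> p h + k * c <= p (h + k).
Proof.
move=> step; elim: k => [|k IH] r_big; first by rewrite mul0n !addn0.
have := IH (fun j j_k => r_big j (ltnW j_k)); have := r_big k (ltnSn k).
by have := step (h + k); rewrite addnS mulSn; lia.
Qed.

Lemma small_increment (p r : nat -> nat) A B n : 0 < n ->
  (forall m, p m + r m <= p m.+1) -> p n <= A * n + B ->
  exists m, [/\ n <= (2 * m).+1, m < n & r m <= 2 * A + B].
Proof.
move=> n0 step p_lin; pose h := n %/ 2.
have [/existsP[m /andP[h_m r_m]] | no_small] :=
  boolP [exists m : 'I_n, (h <= m) && (r m <= 2 * A + B)].
  by exists m; split=> //; rewrite /h in h_m; lia.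
have r_big j : j < n - h -> (2 * A + B).+1 <= r (h + j).
  move=> j_k; rewrite ltnNge; apply: contra no_small => r_small.
  have hj_n : h + j < n by lia.
  by apply/existsP; exists (Ordinal hj_n); rewrite leq_addr.
have grow := growth_sum step r_big; rewrite subnKC ?leq_div // in grow.
have k_half : n <= 2 * (n - h) by rewrite /h; lia.
have k_pos : 0 < n - h by rewrite /h; lia.
have A_le : A * n <= A * (2 * (n - h)) := leq_mul (leqnn A) k_half.
have B_le : B <= B * (n - h) := leq_pmulr B k_pos.
by exfalso; lia.
Qed.

Section CyclicWords.
Variable T : finType.

Lemma cyc_class_refl n (t : n.-tuple T) : t \in cyc_class t.
Proof. by rewrite inE; apply/existsP; exists ord0; rewrite rot0. Qed.

Lemma cyc_class_trans n (t r u : n.-tuple T) :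
  r \in cyc_class t -> u \in cyc_class r -> u \in cyc_class t.
Proof.
rewrite !inE => /existsP[k1 /eqP r_t] /existsP[k2 /eqP u_r]; apply/existsP.
have k_lt : rot_add t k1 k2 < n.+1 by have := leq_rot_add k1 k2 t; rewrite size_tuple.
by exists (Ordinal k_lt); rewrite u_r r_t rot_rot_add.
Qed.

Lemma cyc_class_sym n (t r : n.-tuple T) : r \in cyc_class t -> t \in cyc_class r.
Proof.
rewrite !inE => /existsP[k /eqP r_t]; apply/existsP.
have k_lt : n - k < n.+1 by rewrite ltnS leq_subr.
exists (Ordinal k_lt); apply/eqP.
by rewrite /= r_t -{1}(rotK k t) /rotr size_rot size_tuple.
Qed.

Lemma cyc_class_eq n (t r : n.-tuple T) : r \in cyc_class t -> cyc_class r = cyc_class t.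
Proof.
move=> r_t; apply/setP => u; apply/idP/idP => u_cls; first exact: cyc_class_trans u_cls.
exact: cyc_class_trans (cyc_class_sym r_t) u_cls.
Qed.

Variable x0 : T.

Definition cnth (s : seq T) (j : nat) : T := nth x0 s (j %% size s).

Lemma cnth_congr s x y : x = y %[mod size s] -> cnth s x = cnth s y.
Proof. by rewrite /cnth => ->. Qed.

Lemma cnth_small s j : j < size s -> cnth s j = nth x0 s j.
Proof. by move=> js; rewrite /cnth modn_small. Qed.

Lemma nth_rot k s i : k <= size s -> i < size s -> nth x0 (rot k s) i = cnth s (k + i).
Proof.
move=> k_s i_s; rewrite /cnth /rot nth_cat size_drop; case: ltnP => k_i.
  by rewrite nth_drop modn_small //; lia.
have wrap : k + i = (k + i - size s) + size s by lia.
rewrite wrap modnDr modn_small; last by lia.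
rewrite nth_take; last by lia.
by congr (nth x0 s); lia.
Qed.

Lemma mem_cyc_class n (t u : n.-tuple T) : 0 < n ->
  (u \in cyc_class t) <-> exists k, forall i, i < n -> nth x0 u i = cnth t (k + i).
Proof.
move=> n0; rewrite inE; split.
  case/existsP=> k /eqP ->; exists k => i i_n.
  by rewrite nth_rot ?size_tuple // -ltnS.
case=> k u_t; apply/existsP.
have k_le : k %% n <= n by rewrite ltnW ?ltn_pmod.
exists (Ordinal (k_le : k %% n < n.+1)); apply/eqP/(@eq_from_nth _ x0).
  by rewrite size_rot !size_tuple.
move=> i; rewrite size_tuple => i_n.
rewrite u_t // nth_rot ?size_tuple //.
by apply: cnth_congr; rewrite size_tuple modnDml.
Qed.

Definition cshift n (t : n.-tuple T) k : n.-tuple T :=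
  mkseq_tuple n (fun i => cnth t (k + i)).

Lemma nth_cshift n (t : n.-tuple T) k i :
  i < n -> nth x0 (cshift t k) i = cnth t (k + i).
Proof. exact: nth_mkseq. Qed.

Lemma cshift_mem n (t : n.-tuple T) k : 0 < n -> cshift t k \in cyc_class t.
Proof. by move=> n0; apply/mem_cyc_class => //; exists k => i; apply: nth_cshift. Qed.

Definition is_period n (t : n.-tuple T) k : bool :=
  (0 < k) && [forall i : 'I_n, cnth t (i + k) == cnth t i].

Lemma is_periodP n (t : n.-tuple T) k : 0 < n ->
  is_period t k <-> 0 < k /\ forall j, cnth t (j + k) = cnth t j.
Proof.
move=> n0; split; last by case=> k0 tk; rewrite /is_period k0; apply/forallP => i; rewrite tk.
case/andP=> k0 /forallP tk; split=> // j.
have j_n : j %% n < n by exact: ltn_pmod.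
have /eqP := tk (Ordinal j_n); rewrite /= => tk_j.
rewrite (@cnth_congr t (j + k) (j %% n + k)) ?size_tuple ?modnDml // tk_j.
by apply: cnth_congr; rewrite size_tuple modn_mod.
Qed.

Lemma exists_period n (t : n.-tuple T) : exists k, is_period t k.
Proof.
exists (maxn n 1); apply/andP; split; first by rewrite leq_max orbT.
apply/forallP => i; apply/eqP/cnth_congr; rewrite size_tuple.
by case: n t i => [|n] t [i i_n] //=; rewrite (maxn_idPl (ltn0Sn n)) modnDr.
Qed.

Definition min_period n (t : n.-tuple T) : nat := ex_minn (exists_period t).

Lemma min_periodP n (t : n.-tuple T) :
  is_period t (min_period t) /\ forall k, is_period t k -> min_period t <= k.
Proof. by rewrite /min_period; case: ex_minnP. Qed.

Lemma cshift_eq_period n (t : n.-tuple T) k1 k2 : 0 < n -> k1 < k2 ->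
  cshift t k1 = cshift t k2 -> is_period t (k2 - k1).
Proof.
move=> n0 k12 eq12; apply/is_periodP => //; split; first by rewrite subn_gt0.
have agree i : i < n -> cnth t (k1 + i) = cnth t (k2 + i).
  by move=> i_n; rewrite -!nth_cshift // eq12.
move=> j; pose i := (j + n * k1 - k1) %% n.
have i_n : i < n by exact: ltn_pmod.
have k1i_j : k1 + i = j %[mod n].
  rewrite /i modnDmr (_ : k1 + _ = k1 * n + j) ?modnMDl //.
  by have := leq_pmulr k1 n0; rewrite mulnC; lia.
have k2i_j : k2 + i = j + (k2 - k1) %[mod n].
  rewrite (_ : k2 + i = (k2 - k1) + (k1 + i)); last by lia.
  by rewrite -modnDmr k1i_j modnDmr addnC.
rewrite -(@cnth_congr t (k2 + i)) ?size_tuple // -agree //.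
by apply: cnth_congr; rewrite size_tuple.
Qed.

(* The shifts of t by 0, ..., (min_period t) - 1 are distinct conjugates. *)
Lemma min_period_le_card n (t : n.-tuple T) : 0 < n -> min_period t <= #|cyc_class t|.
Proof.
move=> n0; have [_ minimal] := min_periodP t.
pose shift (k : 'I_(min_period t)) := cshift t k.
have shift_inj : injective shift.
  suff no_collision (k1 k2 : 'I_(min_period t)) : k1 < k2 -> shift k1 <> shift k2.
    move=> k1 k2 eq12; apply: val_inj; case: (ltngtP k1 k2) => // [lt12|lt21].
      by case: (no_collision _ _ lt12).
    by case: (no_collision _ _ lt21).
  move=> lt12 /(cshift_eq_period n0 lt12) /minimal.
  by have := ltn_ord k2; lia.
rewrite -[X in X <= _]card_ord -(card_imset _ shift_inj); apply: subset_leq_card.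
by apply/subsetP => _ /imsetP[k _ ->]; apply: cshift_mem.
Qed.

Lemma common_period_conjugate n (t t' : n.-tuple T) d a a' : 0 < n -> 0 < d ->
  (forall j, cnth t (j + d) = cnth t j) -> (forall j, cnth t' (j + d) = cnth t' j) ->
  (forall i, i < d -> cnth t (a + i) = cnth t' (a' + i)) -> t' \in cyc_class t.
Proof.
move=> n0 d0 td t'd agree; apply/mem_cyc_class => //.
exists (a + a' * d - a') => i i_n.
pose i2 := (i + a' * d - a') %% d.
have i2_d : i2 < d by exact: ltn_pmod.
have a'i2_i : a' + i2 = i %[mod d].
  rewrite /i2 modnDmr (_ : a' + _ = a' * d + i) ?modnMDl //.
  by have := leq_pmulr a' d0; rewrite mulnC; lia.
have ai2_k : a + i2 = a + a' * d - a' + i %[mod d].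
  rewrite /i2 modnDmr; congr (_ %% _).
  by have := leq_pmulr a' d0; rewrite mulnC; lia.
rewrite -cnth_small ?size_tuple // -(periodic_congr d0 t'd a'i2_i) -agree //.
exact: periodic_congr d0 td ai2_k.
Qed.

End CyclicWords.

Section Factors.
Variables (Sigma : finType) (w : infword Sigma).
Local Notation x0 := (w 0).

Definition occurs_at (i : nat) (v : seq Sigma) : bool :=
  v == mkseq (fun k => w (i + k)) (size v).

Lemma occurs_atP i v :
  reflect (forall k, k < size v -> nth x0 v k = w (i + k)) (occurs_at i v).
Proof.
apply: (iffP eqP) => [v_eq k k_v|v_w]; first by rewrite v_eq nth_mkseq // -v_eq.
by apply: (@eq_from_nth _ x0) => [|k k_v]; rewrite ?size_mkseq ?nth_mkseq ?v_w.
Qed.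

Lemma mem_factors_n n (t : n.-tuple Sigma) :
  t \in factors_n w n <-> exists i, occurs_at i t.
Proof.
rewrite inE; split=> [/asboolP[i t_i]|[i /eqP t_i]]; last by apply/asboolP; exists i.
by exists i; apply/eqP.
Qed.

Lemma occurs_at_behead j s : occurs_at j s -> occurs_at j.+1 (behead s).
Proof.
move/occurs_atP=> s_w; apply/occurs_atP => k; rewrite size_behead nth_behead => k_s.
by rewrite s_w ?addSnnS //; lia.
Qed.

Lemma is_factor_occurs i v : occurs_at i v -> is_factor w v.
Proof. by move/eqP; exists i. Qed.

Definition factor_at i n : n.-tuple Sigma := mkseq_tuple n (fun k => w (i + k)).

Lemma occurs_at_factor_at i n : occurs_at i (factor_at i n).
Proof. by rewrite /occurs_at size_mkseq. Qed.

Lemma factor_at_mem i n : factor_at i n \in factors_n w n.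
Proof. by apply/mem_factors_n; exists i; apply: occurs_at_factor_at. Qed.

(* The position of the first occurrence of v in w (0 if v is not a factor). *)
Definition first_occ (v : seq Sigma) : nat :=
  if pselect (exists i, occurs_at i v) is left v_occ then ex_minn v_occ else 0.

Lemma first_occ_min v j : occurs_at j v -> first_occ v <= j.
Proof.
move=> v_j; rewrite /first_occ; case: pselect => [v_occ|[]]; last by exists j.
by case: ex_minnP => i _; apply.
Qed.

Lemma occurs_at_first_occ n (t : n.-tuple Sigma) : t \in factors_n w n ->
  occurs_at (first_occ t) t.
Proof.
move/mem_factors_n=> t_occ; rewrite /first_occ; case: pselect => [v_occ|//].
by case: ex_minnP.
Qed.

Definition introducing n : {set n.-tuple Sigma} :=
  [set u in factors_n w n | first_occ (behead u) == (first_occ u).+1].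

(* A factor of length n - 1 that is not a prefix of w is the suffix of the
   introducing factor that occurs one position before it. *)
Lemma suffix_of_introducing n (x : n.-1.-tuple Sigma) : 0 < n ->
  x \in factors_n w n.-1 -> 0 < first_occ x ->
  exists2 u, u \in introducing n & behead_tuple u = x.
Proof.
move=> n0 xF x_late; set o := first_occ x in x_late.
have x_o : occurs_at o x by exact: occurs_at_first_occ.
pose u := factor_at o.-1 n.
have u_x : behead_tuple u = x.
  apply: val_inj; apply: (@eq_from_nth _ x0) => [|k]; rewrite /= size_behead size_mkseq.
    by rewrite size_tuple.
  move=> k_n; rewrite nth_behead nth_mkseq; last by lia.
  by move/occurs_atP: x_o => -> //; [congr w; lia | rewrite size_tuple].
have bu : behead u = x by rewrite -u_x.
have u_first : first_occ u <= o.-1 := first_occ_min (occurs_at_factor_at o.-1 n).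
have o_le : o <= (first_occ u).+1.
  by rewrite /o -bu; apply/first_occ_min/occurs_at_behead/occurs_at_first_occ/factor_at_mem.
by exists u => //; rewrite inE factor_at_mem bu -/o; apply/eqP; lia.
Qed.

Lemma card_factors_pred n : 0 < n -> factor_complexity w n.-1 <= #|introducing n| + 1.
Proof.
move=> n0; pose prefix := factor_at 0 n.-1.
have late : factors_n w n.-1 :\ prefix \subset (@behead_tuple n Sigma) @: introducing n.
  apply/subsetP => x; rewrite in_setD1 => /andP[x_pref xF].
  have [|u u_intro <-] := suffix_of_introducing n0 xF; last exact: imset_f.
  rewrite lt0n; apply: contra x_pref => /eqP x_0.
  have /eqP x_eq := occurs_at_first_occ xF; rewrite x_0 size_tuple in x_eq.
  by apply/eqP/val_inj; exact: x_eq.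
rewrite /factor_complexity (cardsD1 prefix) addnC leq_add ?leq_b1 //.
exact: leq_trans (subset_leq_card late) (leq_imset_card _ _).
Qed.

(* Every Lie class of length n is the class of a non-introducing factor:
   take the conjugate u of earliest first occurrence and move its last letter
   to the front; the suffix of the resulting word r is a prefix of u, hence
   occurs no later than r itself. *)
Lemma lie_le_card_nonintroducing n : 0 < n ->
  lie_complexity w n <= #|factors_n w n :\: introducing n|.
Proof.
move=> n0; rewrite /lie_complexity.
apply: leq_trans (leq_imset_card (@cyc_class Sigma n) _); apply: subset_leq_card.
apply/subsetP => C /imsetP[t]; rewrite inE => t_full ->.
have [u u_t u_first] :=
  arg_minnP (fun v : n.-tuple Sigma => first_occ v) (cyc_class_refl t).
pose r := cshift x0 u n.-1.
have r_t : r \in cyc_class t by apply: cyc_class_trans u_t (cshift_mem _ _ _ n0).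
have [rF uF] : r \in factors_n w n /\ u \in factors_n w n.
  by split; apply: (subsetP t_full).
have r_suffix : occurs_at (first_occ u) (behead r).
  apply/occurs_atP => k; rewrite size_behead size_tuple => k_n.
  rewrite nth_behead nth_cshift; last by lia.
  rewrite (@cnth_congr _ _ _ _ k) ?size_tuple; last first.
    by rewrite (_ : n.-1 + k.+1 = k + n) ?modnDr //; lia.
  rewrite cnth_small ?size_tuple; last by lia.
  by move/occurs_atP: (occurs_at_first_occ uF) => -> //; rewrite size_tuple; lia.
have suffix_early : first_occ (behead r) <= first_occ u := first_occ_min r_suffix.
have u_early : first_occ u <= first_occ r := u_first _ r_t.
apply/imsetP; exists r; last by rewrite (cyc_class_eq r_t).
by rewrite in_setD rF andbT inE rF andTb; apply/eqP; lia.
Qed.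

Lemma lie_complexity_first_difference n : 0 < n ->
  lie_complexity w n + factor_complexity w n.-1 <= factor_complexity w n + 1.
Proof.
move=> n0; have introF : introducing n \subset factors_n w n.
  by apply/subsetP => u; rewrite inE => /andP[].
have := lie_le_card_nonintroducing n0; have := card_factors_pred n0.
rewrite cardsD (setIidPr introF) /factor_complexity.
by have := subset_leq_card introF; lia.
Qed.

Definition right_special m : {set m.-tuple Sigma} :=
  [set x : m.-tuple Sigma | [exists a, exists b, [&& a != b,
     `[< is_factor w (rcons x a) >] & `[< is_factor w (rcons x b) >]]]].

Definition next_letter (x : seq Sigma) : Sigma := w (first_occ x + size x).

Lemma next_letter_ext m (x : m.-tuple Sigma) :
  x \in factors_n w m -> rcons_tuple x (next_letter x) \in factors_n w m.+1.
Proof.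
move/occurs_at_first_occ/occurs_atP=> x_occ; apply/mem_factors_n; exists (first_occ x).
apply/occurs_atP => k; rewrite size_rcons size_tuple ltnS nth_rcons size_tuple.
case: ltngtP => // [k_m _|-> _]; first by apply: x_occ; rewrite size_tuple.
by rewrite /next_letter size_tuple.
Qed.

Definition other_letter (x : seq Sigma) : Sigma :=
  odflt x0 [pick a | `[< is_factor w (rcons x a) >] && (a != next_letter x)].

Lemma other_letterP m (x : m.-tuple Sigma) : x \in right_special m ->
  rcons_tuple x (other_letter x) \in factors_n w m.+1 /\ other_letter x != next_letter x.
Proof.
rewrite inE => /existsP[a /existsP[b /and3P[ab xa xb]]]; rewrite /other_letter inE.
case: pickP => [c /andP[xc c_next] //|no_other].
have a_next : a = next_letter x by apply/eqP; move: (no_other a); rewrite xa => /negbFE.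
have b_next : b = next_letter x by apply/eqP; move: (no_other b); rewrite xb => /negbFE.
by rewrite a_next b_next eqxx in ab.
Qed.

(* Each factor has a right extension and each right special factor a second
   one, whence p(m) + #(right special factors of length m) <= p(m + 1). *)
Lemma factor_complexity_succ m :
  factor_complexity w m + #|right_special m| <= factor_complexity w m.+1.
Proof.
pose ext (f : seq Sigma -> Sigma) (x : m.-tuple Sigma) := rcons_tuple x (f x).
have ext_inj f x y : ext f x = ext f y -> x = y.
  by move/(congr1 val)/rcons_inj => [/val_inj].
pose E1 := ext next_letter @: factors_n w m.
pose E2 := ext other_letter @: right_special m.
have disjE : [disjoint E1 & E2].
  rewrite -setI_eq0; apply/eqP/setP => z; rewrite in_setI in_set0.
  apply/negP => /andP[/imsetP[x _ ->] /imsetP[y y_rs]].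
  move/(congr1 val)/rcons_inj => [/val_inj xy]; rewrite xy => next_other.
  by have [_] := other_letterP y_rs; rewrite next_other eqxx.
have E12 : E1 :|: E2 \subset factors_n w m.+1.
  apply/subsetP => _ /setUP[/imsetP[x xF ->]|/imsetP[x x_rs ->]].
    exact: next_letter_ext.
  by case: (other_letterP x_rs).
have := subset_leq_card E12; rewrite cardsU (disjoint_setI0 disjE) cards0 subn0.
by rewrite !card_in_imset // => x y _ _ /ext_inj.
Qed.

Definition first_mismatch n (t : n.-tuple Sigma) : option nat :=
  if pselect (exists j, w (first_occ t + j) != cnth x0 t j) is left mis
  then Some (ex_minn mis) else None.

Lemma first_mismatch_None n (t : n.-tuple Sigma) :
  first_mismatch t = None -> forall j, w (first_occ t + j) = cnth x0 t j.
Proof.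
rewrite /first_mismatch; case: pselect => [//|no_mis] _ j.
by apply/eqP; apply: contra_notT no_mis => mis; exists j.
Qed.

Lemma first_mismatch_Some n (t : n.-tuple Sigma) j0 : first_mismatch t = Some j0 ->
  w (first_occ t + j0) != cnth x0 t j0 /\
  forall j, j < j0 -> w (first_occ t + j) = cnth x0 t j.
Proof.
rewrite /first_mismatch; case: pselect => [mis [<-]|//].
case: ex_minnP => j1 mis_j1 j1_min; split=> // j j_j1.
by apply/eqP; apply: contraTT j_j1 => /j1_min; rewrite -leqNgt.
Qed.

(* A factor of length n agrees with its own periodic extension on its first
   occurrence, so a mismatch can only happen at a position >= n. *)
Lemma first_mismatch_ge n (t : n.-tuple Sigma) j0 :
  t \in factors_n w n -> first_mismatch t = Some j0 -> n <= j0.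
Proof.
move=> tF /first_mismatch_Some[mis _]; rewrite leqNgt; apply: contra mis => j0_n.
move/occurs_atP: (occurs_at_first_occ tF) => <-; last by rewrite size_tuple.
by rewrite cnth_small ?size_tuple.
Qed.

Definition mismatch_window m n (t : n.-tuple Sigma) : m.-tuple Sigma :=
  mkseq_tuple m (fun i => cnth x0 t (odflt 0 (first_mismatch t) - m + i)).

(* If all conjugates of t are factors of w and t has a first mismatch, the
   window before the mismatch is right special: in w it is followed by the
   mismatching letter, and inside a conjugate of t by the periodic one. *)
Lemma mismatch_window_right_special m n (t : n.-tuple Sigma) j0 : m < n ->
  cyc_class t \subset factors_n w n -> first_mismatch t = Some j0 ->
  mismatch_window m t \in right_special m.
Proof.
move=> m_n t_full t_mis; have n0 : 0 < n by lia.
have tF : t \in factors_n w n := subsetP t_full _ (cyc_class_refl t).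
have j0_n := first_mismatch_ge tF t_mis.
have [mis agree] := first_mismatch_Some t_mis.
pose win := mismatch_window m t.
have win_nth a k : k <= m ->
    nth x0 (rcons win a) k = if k == m then a else cnth x0 t (j0 - m + k).
  rewrite nth_rcons size_tuple leq_eqVlt => /orP[/eqP->|k_m]; first by rewrite ltnn !eqxx.
  by rewrite k_m ltn_eqF // nth_mkseq // t_mis.
rewrite inE; apply/existsP; exists (w (first_occ t + j0)); apply/existsP.
exists (cnth x0 t j0); rewrite mis /=; apply/andP; split; apply/asboolP.
  apply: (@is_factor_occurs (first_occ t + (j0 - m))); apply/occurs_atP => k.
  rewrite size_rcons size_tuple ltnS => k_m; rewrite win_nth //.
  case: eqP => [->|/eqP k_ne]; first by congr w; lia.
  by rewrite -agree ?addnA //; move: k_ne; rewrite neq_ltn; lia.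
pose r := cshift x0 t (j0 - m).
have rF : r \in factors_n w n := subsetP t_full _ (cshift_mem _ _ _ n0).
have [q /occurs_atP r_q] := proj1 (mem_factors_n r) rF.
apply: (@is_factor_occurs q); apply/occurs_atP => k.
rewrite size_rcons size_tuple ltnS => k_m; rewrite win_nth // -r_q ?size_tuple; last by lia.
rewrite nth_cshift; last by lia.
by case: eqP => [->|//]; rewrite subnK //; lia.
Qed.

(* If two words t, t' with first mismatches have equal windows of length
   m >= d + d', where d and d' are the least periods of t and t', then by the
   weak Fine--Wilf property d is also a period of t', so t and t' are
   conjugate. *)
Lemma mismatch_window_inj m n (t t' : n.-tuple Sigma) j0 j0' : 0 < n ->
  first_mismatch t = Some j0 -> first_mismatch t' = Some j0' ->
  mismatch_window m t = mismatch_window m t' ->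
  min_period x0 t + min_period x0 t' <= m -> cyc_class t = cyc_class t'.
Proof.
move=> n0 t_mis t'_mis win_eq dd'_m.
have [/(is_periodP _ _ _ n0) [d0 td] _] := min_periodP x0 t.
have [/(is_periodP _ _ _ n0) [d'0 t'd'] _] := min_periodP x0 t'.
set d := min_period x0 t in d0 td dd'_m.
set d' := min_period x0 t' in d'0 t'd' dd'_m.
have agree i : i < m -> cnth x0 t (j0 - m + i) = cnth x0 t' (j0' - m + i).
  move=> i_m; have := congr1 (fun v : m.-tuple Sigma => nth x0 v i) win_eq.
  by rewrite /= !nth_mkseq // t_mis t'_mis.
have t'd : forall j, cnth x0 t' (j + d) = cnth x0 t' j.
  apply: (period_transfer d'0 t'd' td (a := j0' - m) (a' := j0 - m) (m := m)).
    by move=> i /agree ->.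
  by rewrite addnC.
suff t't : t' \in cyc_class t by rewrite (cyc_class_eq t't).
apply: (common_period_conjugate n0 d0 td t'd) => i i_d; apply: agree; lia.
Qed.

Lemma no_mismatch_conjugate n (t t' : n.-tuple Sigma) : 0 < n ->
  first_mismatch t = None -> first_mismatch t' = None -> cyc_class t = cyc_class t'.
Proof.
move=> n0 /first_mismatch_None t_per /first_mismatch_None t'_per.
pose u := factor_at (first_occ t + first_occ t') n.
have u_t : u \in cyc_class t.
  apply/mem_cyc_class => //; exists (first_occ t') => i i_n.
  by rewrite nth_mkseq // -addnA t_per.
have u_t' : u \in cyc_class t'.
  apply/mem_cyc_class => //; exists (first_occ t) => i i_n.
  by rewrite nth_mkseq // [first_occ t + _]addnC -addnA t'_per.
by rewrite -(cyc_class_eq u_t) (cyc_class_eq u_t').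
Qed.

Local Notation classes G := ((@cyc_class Sigma _) @: G).

Definition full_words n : {set n.-tuple Sigma} :=
  [set t : n.-tuple Sigma | cyc_class t \subset factors_n w n].

Lemma lie_complexityE n : lie_complexity w n = #|classes (full_words n)|.
Proof. by []. Qed.

(* Distinct classes are disjoint sets of factors and a class contains at least
   (least period) words, so few classes have a long least period. *)
Lemma card_classes_long_period n (G : {set n.-tuple Sigma}) : 0 < n ->
  G \subset full_words n -> {in G, forall t, n < 4 * min_period x0 t} ->
  #|classes G| * n.+1 <= 4 * factor_complexity w n.
Proof.
move=> n0 G_full G_long; set P := classes G.
have P_triv : trivIset P.
  apply/trivIsetP => _ _ /imsetP[t1 _ ->] /imsetP[t2 _ ->] t12.
  rewrite -setI_eq0; apply/eqP/setP => u; rewrite in_setI in_set0.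
  apply/negP => /andP[u1 u2]; move/negP: t12; apply; apply/eqP.
  by rewrite -(cyc_class_eq u1) (cyc_class_eq u2).
have P_fac : cover P \subset factors_n w n.
  apply/bigcupsP => _ /imsetP[t tG ->].
  by have := subsetP G_full t tG; rewrite inE.
have P_big : \sum_(C in P) n.+1 <= \sum_(C in P) 4 * #|C|.
  apply: leq_sum => _ /imsetP[t tG ->].
  by have := G_long t tG; have := min_period_le_card x0 t n0; lia.
rewrite sum_nat_const -big_distrr /= (eqP P_triv) in P_big.
apply: leq_trans P_big _.
by rewrite leq_mul2l (subset_leq_card P_fac) orbT.
Qed.

Lemma card_classes_no_mismatch n (G : {set n.-tuple Sigma}) : 0 < n ->
  {in G, forall t, first_mismatch t = None} -> #|classes G| <= 1.
Proof.
move=> n0 G_per; have [->|[t0 t0G]] := set_0Vmem G; first by rewrite imset0 cards0.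
rewrite -(cards1 (cyc_class t0)); apply/subset_leq_card/subsetP => _ /imsetP[t tG ->].
by rewrite inE (no_mismatch_conjugate n0 (G_per t tG) (G_per t0 t0G)).
Qed.

(* Classes with a mismatch and small least period are determined by their
   windows, which are right special. *)
Lemma card_classes_mismatch m n (G : {set n.-tuple Sigma}) : m < n ->
  G \subset full_words n -> {in G, forall t, first_mismatch t != None} ->
  {in G, forall t, 2 * min_period x0 t <= m} ->
  #|classes G| <= #|right_special m|.
Proof.
move=> m_n G_full G_mis G_short; have n0 : 0 < n by lia.
have window_class : {in G &, forall t t',
    mismatch_window m t = mismatch_window m t' -> cyc_class t = cyc_class t'}.
  move=> t t' tG t'G; have := G_mis t' t'G; have := G_mis t tG.
  case t_mis: (first_mismatch t) => [j0|] // _.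
  case t'_mis: (first_mismatch t') => [j0'|] // _.
  move/(mismatch_window_inj n0 t_mis t'_mis); apply.
  by have := G_short t tG; have := G_short t' t'G; lia.
apply: leq_trans (leq_card_imset_coarser window_class) _.
apply/subset_leq_card/subsetP => _ /imsetP[t tG ->].
have := G_mis t tG; case t_mis: (first_mismatch t) => [j0|] // _.
by apply: mismatch_window_right_special t_mis => //; have := subsetP G_full t tG; rewrite inE.
Qed.

(* Choose m in [(n-1)/2, n) with few right special factors of length
   m, and split the classes of length n by the size of their least period and
   by the existence of a mismatch. *)
Lemma lie_complexity_bounded A B : (forall n, factor_complexity w n <= A * n + B) ->
  forall n, lie_complexity w n <= 6 * A + 5 * B + 1.
Proof.
move=> p_lin [|n].
  rewrite lie_complexityE; apply: leq_trans (leq_imset_card _ _) _.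
  by apply: leq_trans (max_card _) _; rewrite card_tuple expn0 addn1.
set N := n.+1; have N0 : 0 < N by [].
have [m [N_m m_N rs_m]] := small_increment N0 factor_complexity_succ (p_lin N).
pose F := full_words N.
pose Long := F :&: [set t | N < 4 * min_period x0 t].
pose NoMis := F :&: [set t | first_mismatch t == None].
pose Mis := F :&: [set t | (4 * min_period x0 t <= N) && (first_mismatch t != None)].
have F_cover : F \subset Long :|: NoMis :|: Mis.
  apply/subsetP => t tF; rewrite !in_setU !in_setI tF !inE /=.
  by case: ltnP; case: (first_mismatch t == None).
have card_Long : #|classes Long| <= 4 * A + 4 * B.
  have long : {in Long, forall t, N < 4 * min_period x0 t}.
    by move=> t; rewrite !inE => /andP[].
  have := card_classes_long_period N0 (subsetIl _ _) long.
  move=> long_bound; rewrite -(leq_pmul2r (ltn0Sn N)); apply: leq_trans long_bound _.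
  by have := p_lin N; rewrite mulnDl !mulnS; lia.
have card_NoMis : #|classes NoMis| <= 1.
  by apply: card_classes_no_mismatch N0 _ => t; rewrite !inE => /andP[_ /eqP].
have card_Mis : #|classes Mis| <= 2 * A + B.
  apply: leq_trans rs_m; apply: card_classes_mismatch m_N (subsetIl _ _) _ _ => t;
    by rewrite !inE => /and3P[_ t_short t_mis] //; lia.
rewrite lie_complexityE; apply: leq_trans (subset_leq_card (imsetS _ F_cover)) _.
rewrite !imsetU; apply: leq_trans (leq_card_setU _ _).1 _.
have card_union := leq_trans (leq_card_setU _ _).1 (leq_add card_Long card_NoMis).
by apply: leq_trans (leq_add card_union card_Mis) _; lia.
Qed.

End Factors.

Local Open Scope ring_scope.

Theorem theorem1 (Sigma : finType) (w : infword Sigma) :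
  (forall n : nat, (1 <= n)%N ->
     ((lie_complexity w n)%:Z <=
        (factor_complexity w n)%:Z - (factor_complexity w n.-1)%:Z + 1)) /\
  (linear_factor_complexity w ->
     exists C : nat, forall n : nat, (lie_complexity w n <= C)%N).
Proof.
split=> [n n0 | [A [B p_lin]]].
  by have := lie_complexity_first_difference w n0; lia.
by exists (6 * A + 5 * B + 1)%N; apply: lie_complexity_bounded.
Qed.
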